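(* For every $n\in\mathbb{N}$, there exists a planar graph $G$ on $2n$ vertices, of pathwidth $3$ and maximum degree $5$, such that $\pi_\alpha(G)\ge \log_2(n+1)$.
   Context: A string $s=s_1,\ldots,s_{2k}$ (of even length) is an anagram if $s_1,\ldots,s_k$ is a permutation of $s_{k+1},\ldots,s_{2k}$. For a graph $G$, a colouring $\varphi:V(G)\to\{1,\ldots,c\}$ is anagram-free if for every path $v_1,v_2,\ldots,v_{2k}$ in $G$ with an even number $2k\ge 2$ of vertices (i.e., an odd number of edges), the string $\varphi(v_1),\ldots,\varphi(v_{2k})$ is not an anagram. The anagram-free chromatic number $\pi_\alpha(G)$ is the smallest $c$ such that $G$ has an anagram-free colouring with $c$ colours. *)

From Stdlib Require Import Reals.
From mathcomp Require Import all_boot.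

Set Implicit Arguments.
Unset Strict Implicit.
Unset Printing Implicit Defensive.

Definition simple_graph (T : finType) (e : rel T) : Prop :=
  symmetric e /\ irreflexive e.

Definition is_gpath (T : finType) (e : rel T) (p : seq T) : bool :=
  match p with
  | [::] => false
  | x :: q => path e x q && uniq p
  end.

Definition anagram (X : eqType) (s : seq X) : bool :=
  ~~ odd (size s) &&
  perm_eq (take (size s)./2 s) (drop (size s)./2 s).

Definition anagram_free (T : finType) (e : rel T) (c : nat) (f : T -> 'I_c)
  : Prop :=
  forall p : seq T, is_gpath e p -> ~~ odd (size p) -> ~~ anagram (map f p).

(* pi_alpha(G) >= x : the anagram-free chromatic number (the least c such that
   an anagram-free c-colouring exists) is at least x, i.e. every c admitting an
   anagram-free c-colouring satisfies x <= c. *)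
Definition anagram_chromatic_ge (T : finType) (e : rel T) (x : R) : Prop :=
  forall c : nat, (exists f : T -> 'I_c, anagram_free e f) -> Rle x (INR c).

Definition log2 (x : R) : R := Rdiv (ln x) (ln 2).

Definition max_degree_le (T : finType) (e : rel T) (d : nat) : Prop :=
  forall x : T, #|[set y | e x y]| <= d.

Definition path_decomposition (T : finType) (e : rel T) (B : seq {set T})
  : Prop :=
  (forall x : T, exists2 b, b \in B & x \in b) /\
  (forall x y : T, e x y -> exists2 b, b \in B & (x \in b) && (y \in b)) /\
  (forall (x : T) (i j k : nat), i <= j -> j <= k -> k < size B ->
     x \in nth set0 B i -> x \in nth set0 B k -> x \in nth set0 B j).

(* width = (max bag size) - 1; pathwidth <= w iff some path decomposition has
   all bags of size at most w + 1. *)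
Definition pathwidth_le (T : finType) (e : rel T) (w : nat) : Prop :=
  exists B : seq {set T}, path_decomposition e B /\
    (forall b, b \in B -> #|b| <= w.+1).

Definition pt := (R * R)%type.

Definition continuous_curve (g : R -> pt) : Prop :=
  forall t : R, continuity_pt (fun s => fst (g s)) t /\
                continuity_pt (fun s => snd (g s)) t.

Definition in_open01 (t : R) : Prop := Rlt 0 t /\ Rlt t 1.
Definition in_closed01 (t : R) : Prop := Rle 0 t /\ Rle t 1.

(* A planar drawing: vertices are distinct points of the plane, each edge xy
   is a simple (injective on [0,1]) continuous arc from pos x to pos y whose
   interior avoids all vertex points, and the interiors of arcs of distinct
   edges are disjoint.  (An arc is given for each ordered adjacent pair; arcs
   of the same edge in both orientations are not required to be related.) *)
Definition planar (T : finType) (e : rel T) : Prop :=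
  exists (pos : T -> pt) (arc : T -> T -> R -> pt),
    injective pos /\
    (forall x y : T, e x y ->
       continuous_curve (arc x y) /\
       arc x y R0 = pos x /\ arc x y R1 = pos y /\
       (forall s t, in_closed01 s -> in_closed01 t ->
          arc x y s = arc x y t -> s = t) /\
       (forall t z, in_open01 t -> arc x y t <> pos z)) /\
    (forall x y u v : T, e x y -> e u v ->
       ~ ((x = u /\ y = v) \/ (x = v /\ y = u)) ->
       forall s t, in_open01 s -> in_open01 t -> arc x y s <> arc u v t).

(* The graph is the strong product of the path on n vertices with an edge:
   vertices (i, b) with i < n and b : bool, adjacent when distinct and in the
   same or in consecutive columns.  Listing the vertices along a U (the top row
   left to right, then the bottom row right to left) and drawing the diagonals
   (i+1, top)(i, bottom) below that line and all other edges above it, the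
   edges on each side span nested or disjoint intervals, so parabolic arcs give
   a planar drawing; bags of two consecutive columns have four vertices.

   For the lower bound, record for each of the n + 1 prefixes of columns the
   parity of the number of occurrences of every colour.  With c colours two of
   these 2^c-valued vectors coincide once n + 1 > 2^c, so some block of
   consecutive columns uses every colour an even number of times.  An Eulerian
   orientation of the multigraph on colours with one edge per column of the
   block chooses a vertex in each column such that the chosen and the
   remaining vertices carry the same multiset of colours; walking along the
   chosen vertices and back along the others is a path whose colour string is
   an anagram. *)

From Stdlib Require Import Reals Lra Psatz.
From mathcomp Require Import all_boot zify.

Set Implicit Arguments.
Unset Strict Implicit.
Unset Printing Implicit Defensive.

Section EulerianOrientation.
Variable X : eqType.
Implicit Types (p q : X * X) (s t : seq (X * X)).

Definition same_edge p q := (q == p) || (q == (p.2, p.1)).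
Definition reorientation s t := all2 same_edge s t.
Definition ends s := unzip1 s ++ unzip2 s.

Lemma same_edge_swap p u v : same_edge p (u, v) = same_edge p (v, u).
Proof.
by case: p => p1 p2; apply/orP/orP => -[] /eqP[-> ->]; rewrite eqxx; by [left | right].
Qed.

Lemma same_edge_count (P : pred X) p q : same_edge p q -> P q.1 + P q.2 = P p.1 + P p.2.
Proof. by case/orP=> /eqP -> //=; rewrite addnC. Qed.

Lemma same_edge_at p a : (p.1 == a) || (p.2 == a) -> exists x, same_edge p (x, a).
Proof.
case: p => p1 p2 /orP[] /eqP /= <-; last by exists p1; rewrite /same_edge eqxx.
by exists p2; rewrite /same_edge eqxx orbT.
Qed.

Lemma reorientation_catl s1 s2 t : reorientation (s1 ++ s2) t ->
  exists t1 t2, [/\ t = t1 ++ t2, reorientation s1 t1 & reorientation s2 t2].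
Proof.
elim: s1 t => [|p s1 IH] [|q t] //=; first by exists [::], [::].
- by exists [::], (q :: t).
- case/andP=> pq /IH [t1 [t2 [-> H1 H2]]].
  by exists (q :: t1), t2; rewrite /reorientation /= pq.
Qed.

Lemma reorientation_cat s1 s2 t1 t2 :
  reorientation s1 t1 -> reorientation s2 t2 -> reorientation (s1 ++ s2) (t1 ++ t2).
Proof. by elim: s1 t1 => [|p s1 IH] [|q t1] //= /andP[-> /IH]. Qed.

Lemma incident_split s a : 0 < count_mem a (ends s) ->
  exists s1 q s2 y, s = s1 ++ q :: s2 /\ same_edge q (a, y).
Proof.
rewrite /ends count_cat; elim: s => [|[p1 p2] s IH] //=.
move=> deg_a; case E: ((p1 == a) || (p2 == a)).
  have [y] := same_edge_at (p := (p1, p2)) E; rewrite same_edge_swap => Hy.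
  by exists [::], (p1, p2), s, y.
have [|s1 [q [s2 [y [-> Hq]]]]] := IH.
  by move: E deg_a; case: (p1 == a); case: (p2 == a) => //=; lia.
by exists ((p1, p2) :: s1), q, s2, y.
Qed.

Lemma split_at_vertex s a : 1 < count_mem a (ends s) ->
  (exists s1 s2, s = s1 ++ (a, a) :: s2) \/
  (exists s1 s2 s3 p q x y,
     [/\ s = s1 ++ p :: s2 ++ q :: s3, same_edge p (x, a) & same_edge q (a, y)]).
Proof.
rewrite /ends count_cat; elim: s => [|[p1 p2] s IH] //=.
case E1: (p1 == a); case E2: (p2 == a) => /= deg_a.
- by left; exists [::], s; move/eqP: E1 => ->; move/eqP: E2 => ->.
- have [x Hx] : exists x, same_edge (p1, p2) (x, a) by apply: same_edge_at; rewrite E1.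
  have [|s2 [q [s3 [y [-> Hq]]]]] := @incident_split s a; first by rewrite /ends count_cat; lia.
  by right; exists [::], s2, s3, (p1, p2), q, x, y.
- have [x Hx] : exists x, same_edge (p1, p2) (x, a) by apply: same_edge_at; rewrite E2 orbT.
  have [|s2 [q [s3 [y [-> Hq]]]]] := @incident_split s a; first by rewrite /ends count_cat; lia.
  by right; exists [::], s2, s3, (p1, p2), q, x, y.
- case: IH; first lia.
  + by case=> s1 [s2 ->]; left; exists ((p1, p2) :: s1), s2.
  + case=> s1 [s2 [s3 [q [q' [x [y [-> Hq Hq']]]]]]].
    by right; exists ((p1, p2) :: s1), s2, s3, q, q', x, y.
Qed.

Definition balanced t := perm_eq (unzip1 t) (unzip2 t).

Lemma balanced_reorientation_loop s1 s2 a t :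
  reorientation (s1 ++ s2) t -> balanced t ->
  exists2 t', reorientation (s1 ++ (a, a) :: s2) t' & balanced t'.
Proof.
move=> /reorientation_catl[t1 [t2 [-> H1 H2]]] /permP bal_t.
exists (t1 ++ (a, a) :: t2).
  by apply: reorientation_cat => //=; rewrite H2 /same_edge eqxx.
apply/permP => P; move: (bal_t P); clear.
by rewrite /unzip1 /unzip2 !map_cat !count_cat /=; lia.
Qed.

Lemma balanced_reorientation_detour s1 s2 s3 p q a x y t :
  same_edge p (x, a) -> same_edge q (a, y) ->
  reorientation (s1 ++ (x, y) :: s2 ++ s3) t -> balanced t ->
  exists2 t', reorientation (s1 ++ p :: s2 ++ q :: s3) t' & balanced t'.
Proof.
move=> Hp Hq /reorientation_catl[t1 [[|r t'] [-> H1 //= /andP[Hr]]]].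
move=> /reorientation_catl[t2 [t3 [-> H2 H3]]] /permP bal_t.
case/orP: Hr => /eqP Er; subst r.
- exists (t1 ++ (x, a) :: t2 ++ (a, y) :: t3).
    by apply: reorientation_cat => //=; rewrite Hp; apply: reorientation_cat => //=; rewrite Hq.
  apply/permP => P; move: (bal_t P); clear.
  by rewrite /unzip1 /unzip2 !map_cat !count_cat /= !map_cat !count_cat /=; lia.
- exists (t1 ++ (a, x) :: t2 ++ (y, a) :: t3).
    apply: reorientation_cat => //=; rewrite same_edge_swap Hp.
    by apply: reorientation_cat => //=; rewrite same_edge_swap Hq.
  apply/permP => P; move: (bal_t P); clear.
  by rewrite /unzip1 /unzip2 !map_cat !count_cat /= !map_cat !count_cat /=; lia.
Qed.

(* Two edges at a vertex a are merged into one edge avoiding a (a loop at a is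
   dropped); an orientation of the smaller multigraph then extends by routing
   the merged edge through a. *)
Lemma eulerian_orientation s : (forall a, ~~ odd (count_mem a (ends s))) ->
  exists2 t, reorientation s t & balanced t.
Proof.
elim: {s}_.+1 {-2}s (ltnSn (size s)) => // N IH s size_s even_s.
case: s size_s even_s => [|[a z] s0] size_s even_s; first by exists [::].
have deg_a : 1 < count_mem a (ends ((a, z) :: s0)).
  have pos_a : 0 < count_mem a (ends ((a, z) :: s0)) by rewrite /ends /= eqxx.
  by move: pos_a (even_s a); case: (count_mem a _) => [|[|k]].
have [[s1 [s2 Es]] | [s1 [s2 [s3 [p [q [x [y [Es Hp Hq]]]]]]]]] := split_at_vertex deg_a;
  rewrite Es in size_s even_s *.
- have [|b|t] := IH (s1 ++ s2); last exact: balanced_reorientation_loop.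
    by move: size_s; rewrite !size_cat /=; lia.
  have count_ends : count_mem b (ends (s1 ++ (a, a) :: s2)) =
      count_mem b (ends (s1 ++ s2)) + ((a == b) + (a == b)).
    by rewrite /ends /unzip1 /unzip2 !map_cat !count_cat /=; lia.
  by have := even_s b; rewrite count_ends addnn oddD odd_double addbF.
- have [|b|t] := IH (s1 ++ (x, y) :: s2 ++ s3); last exact: balanced_reorientation_detour Hp Hq.
    by move: size_s; rewrite !size_cat /= !size_cat /=; lia.
  have count_ends : count_mem b (ends (s1 ++ p :: s2 ++ q :: s3)) =
      count_mem b (ends (s1 ++ (x, y) :: s2 ++ s3)) + ((a == b) + (a == b)).
    have := same_edge_count (pred1 b) Hp; have := same_edge_count (pred1 b) Hq; clear.
    by rewrite /ends /unzip1 /unzip2 !map_cat !count_cat /= !map_cat !count_cat /=; lia.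
  by have := even_s b; rewrite count_ends addnn oddD odd_double addbF.
Qed.

Lemma reorientation_choice (I : eqType) (F : I -> bool -> X) (l : seq I) t :
  uniq l -> reorientation [seq (F k true, F k false) | k <- l] t ->
  exists b : I -> bool, t = [seq (F k (b k), F k (~~ b k)) | k <- l].
Proof.
elim: l t => [|k l IH] [|q t] //=; first by exists xpredT.
case/andP=> k_l uniq_l /andP[Hq /(IH _ uniq_l)[b ->]].
exists (fun j => if j == k then q == (F k true, F k false) else b j).
rewrite eqxx; congr (_ :: _).
  by case/orP: Hq => /eqP ->; rewrite ?eqxx //; case: eqP => // ->.
by apply/eq_in_map => j j_l; case: eqP j_l k_l => // ->->.
Qed.

Lemma balanced_choice (I : eqType) (F : I -> bool -> X) (l : seq I) : uniq l ->
  (forall a, ~~ odd (count_mem a ([seq F k true | k <- l] ++ [seq F k false | k <- l]))) ->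
  exists b : I -> bool, perm_eq [seq F k (b k) | k <- l] [seq F k (~~ b k) | k <- l].
Proof.
move=> uniq_l even_l.
have [|t /(reorientation_choice uniq_l)[b ->] balanced_t] :=
  eulerian_orientation (s := [seq (F k true, F k false) | k <- l]).
  by move=> a; rewrite /ends /unzip1 /unzip2 -!map_comp.
by exists b; move: balanced_t; rewrite /balanced /unzip1 /unzip2 -!map_comp.
Qed.
End EulerianOrientation.

Definition laminar (a b c d : nat) : bool :=
  [|| b <= c, d <= a, (a <= c) && (d <= b) | (c <= a) && (b <= d)].

Section Parabolas.
Local Open Scope R_scope.

Definition lerp (p q t : R) : R := p + (q - p) * t.

Definition parabola_arc (below : bool) (p q t : R) : pt :=
  (lerp p q t, (if below then -1 else 1) * ((lerp p q t - p) * (q - lerp p q t))).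

Lemma parabola_arc_continuous below p q : continuous_curve (parabola_arc below p q).
Proof. by move=> t; rewrite /parabola_arc /lerp /=; split; reg. Qed.

Lemma parabola_height_pos p q t : p <> q -> in_open01 t ->
  0 < (lerp p q t - p) * (q - lerp p q t).
Proof.
move=> pq [t0 t1]; have q_p : 0 < (q - p) * (q - p) by nra.
have -> : (lerp p q t - p) * (q - lerp p q t) = (q - p) * (q - p) * (t * (1 - t)).
  by rewrite /lerp; ring.
by apply: Rmult_lt_0_compat => //; nra.
Qed.

Lemma parabola_span (p q : nat) t (X := lerp (INR p) (INR q) t) :
  p <> q -> in_open01 t ->
  INR (minn p q) < X < INR (maxn p q) /\
  (X - INR p) * (INR q - X) = (X - INR (minn p q)) * (INR (maxn p q) - X).
Proof.
move=> pq [t0 t1]; rewrite /X /lerp; case: (leqP p q) => [le_pq | lt_qp].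
  have lt_pq : INR p < INR q by apply: lt_INR; apply/ltP; lia.
  by split; [split|]; nra.
have lt_qp' : INR q < INR p by apply: lt_INR; apply/ltP.
by split; [split|]; nra.
Qed.

(* Over nested intervals the outer parabola lies strictly above the inner one. *)
Lemma laminar_parabolas_eq (a b c d : nat) (X : R) : laminar a b c d ->
  INR a < X < INR b -> INR c < X < INR d ->
  (X - INR a) * (INR b - X) = (X - INR c) * (INR d - X) -> a = c /\ b = d.
Proof.
have le_R m k : (m <= k)%N -> INR m <= INR k by move=> /leP; apply: le_INR.
case/or4P=> [/le_R | /le_R | /andP[/le_R ac /le_R db] | /andP[/le_R ca /le_R bd]] *;
  try lra; split; apply: INR_eq; nra.
Qed.
End Parabolas.

Section TwoPageDrawing.
Variables (T : finType) (e : rel T) (pos : T -> nat) (below : T -> T -> bool).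
Hypotheses (pos_inj : injective pos) (e_irr : irreflexive e).
Hypothesis pages_laminar : forall x y u v, e x y -> e u v -> below x y = below u v ->
  laminar (minn (pos x) (pos y)) (maxn (pos x) (pos y))
          (minn (pos u) (pos v)) (maxn (pos u) (pos v)).

Local Open Scope R_scope.

Let arc x y := parabola_arc (below x y) (INR (pos x)) (INR (pos y)).

Lemma edge_pos_neq x y : e x y -> pos x <> pos y.
Proof. by move=> xy /pos_inj eq_xy; move: xy; rewrite eq_xy e_irr. Qed.

Lemma edge_INR_pos_neq x y : e x y -> INR (pos x) <> INR (pos y).
Proof. by move=> xy /INR_eq; apply: edge_pos_neq. Qed.

Lemma arcs_meet_span x y u v s t : e x y -> e u v -> in_open01 s -> in_open01 t ->
  arc x y s = arc u v t ->
  minn (pos x) (pos y) = minn (pos u) (pos v) /\ maxn (pos x) (pos y) = maxn (pos u) (pos v).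
Proof.
move=> xy uv s01 t01 [eq_X eq_height].
have h_xy := parabola_height_pos (edge_INR_pos_neq xy) s01.
have h_uv := parabola_height_pos (edge_INR_pos_neq uv) t01.
have same_page : below x y = below u v.
  by move: eq_height; case: (below x y); case: (below u v) => //; lra.
have [span_xy height_xy] := parabola_span (edge_pos_neq xy) s01.
have [span_uv height_uv] := parabola_span (edge_pos_neq uv) t01.
apply: laminar_parabolas_eq (pages_laminar xy uv same_page) span_xy _ _.
  by rewrite eq_X.
rewrite -height_xy [in RHS]eq_X -height_uv.
by move: eq_height; rewrite same_page; case: (below u v); lra.
Qed.

Lemma two_page_planar : planar e.
Proof.
exists (fun x => (INR (pos x), R0)), arc; split; [|split].
- by move=> x y [/INR_eq /pos_inj].
- move=> x y xy; have pq := edge_INR_pos_neq xy.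
  split; first exact: parabola_arc_continuous.
  rewrite /arc /parabola_arc /lerp; split; [|split; [|split]].
  + by f_equal; ring.
  + by f_equal; ring.
  + move=> s t _ _ [st _]; apply: (Rmult_eq_reg_l (INR (pos y) - INR (pos x))); lra.
  + move=> t z t01 [_]; have := parabola_height_pos pq t01.
    by rewrite /lerp; case: below; lra.
- move=> x y u v xy uv not_same s t s01 t01 meet; apply: not_same.
  have [min_eq max_eq] := arcs_meet_span xy uv s01 t01 meet.
  have [[/pos_inj -> /pos_inj ->] | [/pos_inj -> /pos_inj ->]] :
    (pos x = pos u /\ pos y = pos v) \/ (pos x = pos v /\ pos y = pos u) by lia.
  + by left.
  + by right.
Qed.
End TwoPageDrawing.

(* Column [i] holds [(i, true)] in the top row and [(i, false)] in the bottom row. *)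
Definition ladder (n : nat) := ('I_n * bool)%type.

Definition ladder_adj n : rel (ladder n) :=
  fun x y => [&& x != y, x.1 <= y.1.+1 & y.1 <= x.1.+1].

Section Ladder.
Variable n : nat.
Implicit Types x y : ladder n.

Lemma card_ladder : #|{: ladder n}| = (2 * n)%N.
Proof. by rewrite card_prod card_ord card_bool mulnC. Qed.

Lemma ladder_simple : simple_graph (@ladder_adj n).
Proof.
split=> [x y | x]; last by rewrite /ladder_adj eqxx.
by rewrite /ladder_adj eq_sym; case: (y != x) => //=; rewrite andbC.
Qed.

Lemma ladder_adj_cols x y : ladder_adj x y ->
  [/\ x.1 <= y.1.+1, y.1 <= x.1.+1 & (x.1 != y.1 :> nat) || (x.2 != y.2)].
Proof.
case: x y => [i b] [j c] /and3P[xy -> ->]; split=> //=.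
by apply: contraNT xy; rewrite negb_or !negbK => /andP[/eqP/val_inj -> /eqP ->].
Qed.

Lemma card_ladder_cols (A : {set ladder n}) k w :
  (forall y, y \in A -> k <= y.1 < k + w) -> #|A| <= w * 2.
Proof.
move=> A_cols; pose g y := (val y.1, y.2).
have g_inj : injective g by move=> [i b] [j c] [/val_inj -> ->].
rewrite cardE -(size_map g).
have -> : w * 2 = size [seq (j, c) | j <- iota k w, c <- [:: true; false]].
  by rewrite size_allpairs size_iota.
apply: uniq_leq_size; first by rewrite map_inj_uniq ?enum_uniq.
move=> _ /mapP[y y_A ->]; apply: allpairs_f; last by case: y.2.
by rewrite mem_iota A_cols // -mem_enum.
Qed.

Lemma ladder_max_degree : max_degree_le (@ladder_adj n) 5.
Proof.
rewrite /max_degree_le => -[i b]; set N := [set y | ladder_adj (i, b) y].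
have x_N : (i, b) \notin N by rewrite inE /ladder_adj eqxx.
suff : #|(i, b) |: N| <= 3 * 2 by rewrite cardsU1 x_N.
apply: (@card_ladder_cols _ (i - 1)) => y.
by rewrite !inE => /orP[/eqP -> | /ladder_adj_cols[]] /=; lia.
Qed.

Definition ladder_bag (i : nat) : {set ladder n} := [set y : ladder n | i <= y.1 <= i.+1].

Lemma ladder_pathwidth : pathwidth_le (@ladder_adj n) 3.
Proof.
exists [seq ladder_bag i | i <- iota 0 n]; split; last first.
  move=> _ /mapP[i _ ->]; apply: (@card_ladder_cols _ i 2) => y.
  by rewrite inE; lia.
split; [|split].
- move=> [i b]; exists (ladder_bag i); last by rewrite inE /=; lia.
  by rewrite map_f // mem_iota /=; have := ltn_ord i; lia.
- move=> [i b] [j c] /ladder_adj_cols[/= ij ji _]; exists (ladder_bag (minn i j)).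
    by rewrite map_f // mem_iota /=; have := ltn_ord i; lia.
  by rewrite !inE /=; lia.
- move=> [i b] p q r pq qr; rewrite size_map size_iota => r_n.
  by rewrite !(nth_map 0) ?size_iota ?nth_iota ?inE /=; lia.
Qed.

Definition ladder_pos x : nat := if x.2 then val x.1 else 2 * n - 1 - x.1.

Definition ladder_below x y : bool :=
  (x.2 && ~~ y.2 && (x.1 == y.1.+1 :> nat)) || (y.2 && ~~ x.2 && (y.1 == x.1.+1 :> nat)).

Lemma ladder_pos_inj : injective ladder_pos.
Proof.
move=> [i b] [j c]; rewrite /ladder_pos /=; have := ltn_ord i; have := ltn_ord j.
by case: b; case: c => /= ? ? ?; try lia; congr pair; apply: val_inj => /=; lia.
Qed.

Lemma ladder_pages_laminar x y u v :
  ladder_adj x y -> ladder_adj u v -> ladder_below x y = ladder_below u v ->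
  laminar (minn (ladder_pos x) (ladder_pos y)) (maxn (ladder_pos x) (ladder_pos y))
          (minn (ladder_pos u) (ladder_pos v)) (maxn (ladder_pos u) (ladder_pos v)).
Proof.
case: x y u v => [i b] [j c] [k d] [l g].
move=> /ladder_adj_cols[/= ij ji bc] /ladder_adj_cols[/= kl lk dg].
have := ltn_ord i; have := ltn_ord j; have := ltn_ord k; have := ltn_ord l.
rewrite /laminar /ladder_pos /ladder_below /=.
by move: bc dg; case: b; case: c; case: d; case: g => /=; lia.
Qed.

Lemma ladder_planar : planar (@ladder_adj n).
Proof.
apply: (two_page_planar ladder_pos_inj _ ladder_pages_laminar).
by case: ladder_simple.
Qed.
End Ladder.

Lemma anagram_cat_rev (X : eqType) (s1 s2 : seq X) :
  size s1 = size s2 -> anagram (s1 ++ rev s2) = perm_eq s1 s2.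
Proof.
move=> size_s; rewrite /anagram size_cat size_rev -size_s addnn odd_double half_double /=.
by rewrite take_size_cat // drop_size_cat // perm_sym perm_rev perm_sym.
Qed.

Lemma last_iota i l : last i (iota i.+1 l) = i + l.
Proof. by elim: l i => [|l IH] i; rewrite ?addn0 //= IH addnS. Qed.

Section Hairpin.
Variable n : nat.

Definition col k b : ladder n.+1 := (inord k, b).

Lemma col_inj j k b c : j <= n -> k <= n -> col j b = col k c -> j = k /\ b = c.
Proof. by move=> j_n k_n [/(congr1 val)]; rewrite /= !inordK. Qed.

Lemma col_adj_succ k b c : k < n -> ladder_adj (col k b) (col k.+1 c).
Proof.
move=> k_n; have k_n1 : k < n.+1 by lia.
rewrite /ladder_adj /col /= !inordK //; apply/and3P; split; try lia.
by apply/eqP => -[/(congr1 val)]; rewrite /= !inordK //; lia.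
Qed.

Lemma col_adj_flip k b : ladder_adj (col k b) (col k (~~ b)).
Proof. by rewrite /ladder_adj /col /= !leqnSn xpair_eqE; case: b; rewrite andbF. Qed.

Lemma path_cols (b : nat -> bool) i l : i + l <= n ->
  path (@ladder_adj n.+1) (col i (b i)) [seq col k (b k) | k <- iota i.+1 l].
Proof.
elim: l i => [|l IH] i il //=.
by rewrite col_adj_succ ?IH //; lia.
Qed.

Definition hairpin (b : nat -> bool) i len : seq (ladder n.+1) :=
  [seq col k (b k) | k <- iota i len] ++ rev [seq col k (~~ b k) | k <- iota i len].

Lemma hairpin_uniq b i len : i + len <= n.+1 -> uniq (hairpin b i len).
Proof.
move=> il; have col_inj_iota c c' j k : j \in iota i len -> k \in iota i len ->
    col j c = col k c' -> j = k /\ c = c'.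
  by rewrite !mem_iota => /andP[_ j_n] /andP[_ k_n]; apply: col_inj; lia.
rewrite cat_uniq rev_uniq has_rev !map_inj_in_uniq ?iota_uniq ?andbT;
  try by move=> j k j_i k_i /col_inj_iota-/(_ j_i k_i)[].
apply/hasPn => _ /mapP[k k_i ->]; apply/mapP => -[j j_i /col_inj_iota].
by move=> /(_ k_i j_i)[<-]; case: (b k).
Qed.

Lemma hairpin_gpath b i len : 0 < len -> i + len <= n.+1 ->
  is_gpath (@ladder_adj n.+1) (hairpin b i len).
Proof.
case: len => // l _ il; have := hairpin_uniq b il.
rewrite /hairpin /= => ->; rewrite andbT cat_path path_cols; last by lia.
rewrite (last_map (fun k => col k (b k))) last_iota lastI rev_rcons /=.
have adj_sym : (fun x y => @ladder_adj n.+1 y x) =2 @ladder_adj n.+1.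
  by case: (ladder_simple n.+1) => sym _ x y; rewrite sym.
rewrite rev_path (eq_path adj_sym) (last_map (fun k => col k (~~ b k))) last_iota.
by rewrite col_adj_flip (path_cols (fun k => ~~ b k)) //; lia.
Qed.

Variables (c : nat) (f : ladder n.+1 -> 'I_c).

Definition block_colours i len : seq 'I_c :=
  [seq f (col k true) | k <- iota i len] ++ [seq f (col k false) | k <- iota i len].

Lemma even_block_not_anagram_free i len : 0 < len -> i + len <= n.+1 ->
  (forall a, ~~ odd (count_mem a (block_colours i len))) -> ~ anagram_free (@ladder_adj n.+1) f.
Proof.
move=> len_gt0 il even_block anagram_free_f.
have [b perm_b] := @balanced_choice _ _ (fun k c => f (col k c)) _ (iota_uniq i len) even_block.
have ana : anagram (map f (hairpin b i len)).
  by rewrite map_cat map_rev -!map_comp anagram_cat_rev ?size_map.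
have /andP[even_size _] := ana; rewrite size_map in even_size.
by have /(_ even_size)/negP := anagram_free_f _ (hairpin_gpath b len_gt0 il).
Qed.

Lemma count_block_cat a x y : x <= y -> count_mem a (block_colours 0 y) =
  count_mem a (block_colours 0 x) + count_mem a (block_colours x (y - x)).
Proof.
move=> xy; rewrite /block_colours.
have -> : iota 0 y = iota 0 x ++ iota x (y - x) by rewrite -{1}(subnKC xy) iotaD.
by rewrite !map_cat !count_cat; lia.
Qed.

Lemma ladder_colours_bound : anagram_free (@ladder_adj n.+1) f -> n.+2 <= 2 ^ c.
Proof.
move=> anagram_free_f.
pose parity (k : 'I_n.+2) := [ffun a => odd (count_mem a (block_colours 0 k))].
suff /leq_card : injective parity by rewrite card_ord card_ffun card_bool card_ord.
have parity_lt (x y : 'I_n.+2) : x < y -> parity x != parity y.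
  move=> xy; apply/eqP => /ffunP eq_parity.
  apply: (@even_block_not_anagram_free x (y - x)) => //; first lia.
    by have := ltn_ord y; lia.
  move=> a; move: (eq_parity a); rewrite !ffunE (count_block_cat a (ltnW xy)) oddD.
  by case: odd; case: odd.
move=> x y eq_xy; apply: val_inj; case: (ltngtP x y) => // [xy | yx].
- by have := parity_lt _ _ xy; rewrite eq_xy eqxx.
- by have := parity_lt _ _ yx; rewrite eq_xy eqxx.
Qed.
End Hairpin.

Lemma anagram_free_ladder_bound n c (f : ladder n -> 'I_c) :
  anagram_free (@ladder_adj n) f -> n.+1 <= 2 ^ c.
Proof.
case: n f => [|n] f anagram_free_f; first by rewrite expn_gt0.
exact: ladder_colours_bound anagram_free_f.
Qed.

Section Log2.
Local Open Scope R_scope.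

Lemma INR_expn (m k : nat) : INR (m ^ k) = INR m ^ k.
Proof. by elim: k => [|k IH] //=; rewrite expnS mult_INR IH. Qed.

Lemma log2_le_of_pow (N c : nat) : (N.+1 <= 2 ^ c)%N -> log2 (INR N + 1) <= INR c.
Proof.
move=> /leP /le_INR; rewrite S_INR INR_expn /= => le_2c.
have ln2_gt0 : 0 < ln 2 by rewrite -ln_1; apply: ln_increasing; lra.
have ln_le : ln (INR N + 1) <= INR c * ln 2.
  rewrite -ln_pow; last lra.
  have N1_gt0 : 0 < INR N + 1 by have := pos_INR N; lra.
  by case: (Rle_lt_or_eq_dec _ _ le_2c) => [lt_2c | ->]; [left; apply: ln_increasing | right].
apply: (Rmult_le_reg_r (ln 2)) => //.
by rewrite /log2 /Rdiv Rmult_assoc Rinv_l ?Rmult_1_r //; lra.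
Qed.
End Log2.


Theorem theorem1 (n : nat) :
  exists (T : finType) (e : rel T),
    #|T| = (2 * n)%N /\
    simple_graph e /\
    planar e /\
    pathwidth_le e 3 /\
    max_degree_le e 5 /\
    anagram_chromatic_ge e (log2 (INR n + 1)).
Proof.
exists (ladder n), (@ladder_adj n).
split; first exact: card_ladder.
split; first exact: ladder_simple.
split; first exact: ladder_planar.
split; first exact: ladder_pathwidth.
split; first exact: ladder_max_degree.
move=> c [f anagram_free_f]; apply: log2_le_of_pow.
exact: anagram_free_ladder_bound anagram_free_f.
Qed.
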